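(* Let $L\in\mathbb{R}^{n\times m}$ be arbitrary, let $F_d\in\mathbb{R}^{p\times n}$ be a deadbeat gain (all eigenvalues of $A_{F_d}=A+BF_d$ equal zero), let $s\ge1$, $k$ be integers, and let $(u,y,r,\hat x)$ be a solution of the kernel-based model with gain $L$ on the time interval $[k-n+1,k+s]$. Then for every $F\in\mathbb{R}^{p\times n}$ there exists $v\in\mathbb{R}^{(s+n)p}$ such that $$\begin{bmatrix}u_s(k)\\ y_s(k)\end{bmatrix}=I_{G,s}(F)\,v+I_{C,s}(F_d,L)\,r_{s+n}(k-n).$$
   Context: Consider the discrete-time LTI system $x(k+1)=Ax(k)+Bu(k)$, $y(k)=Cx(k)+Du(k)$ with $u\in\mathbb{R}^p$, $x\in\mathbb{R}^n$, $y\in\mathbb{R}^m$, $n\ge 1$, and $(A,B,C,D)$ a minimal (controllable and observable) realization. For a sequence $\phi$ and integers $k$, $s\ge1$, the stacked vector is $\phi_s(k)=[\phi(k+1)^T,\dots,\phi(k+s)^T]^T$. For $F\in\mathbb{R}^{p\times n}$ put $A_F=A+BF$ and $C_F=C+DF$. Kernel-based model with observer gain $L\in\mathbb{R}^{n\times m}$: sequences $u,y,r\ (\in\mathbb{R}^m),\hat x$ satisfying $\hat x(k+1)=A\hat x(k)+Bu(k)+Lr(k)$, $y(k)=C\hat x(k)+Du(k)+r(k)$ ($r$ is the residual). Finite-sample image representation: $M_s(F)\in\mathbb{R}^{sp\times(s+n)p}$, $N_s(F)\in\mathbb{R}^{sm\times(s+n)p}$ with $(l,j)$ blocks ($l=1,\dots,s$;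 $j=1,\dots,s+n$) $M_{n+l-j}$, $N_{n+l-j}$, where $M_k=FA_F^{k-1}B$ ($k\ge1$), $M_0=I_p$, $M_k=0$ ($k<0$), $N_k=C_FA_F^{k-1}B$ ($k\ge1$), $N_0=D$, $N_k=0$ ($k<0$); $I_{G,s}(F)=\begin{bmatrix}M_s(F)\\ N_s(F)\end{bmatrix}$. For gains $F,L$: $\hat Y_s(F,L)\in\mathbb{R}^{sp\times(s+n)m}$, $\hat X_s(F,L)\in\mathbb{R}^{sm\times(s+n)m}$ with $(l,j)$ blocks $\hat Y_{n+l-j}$, $\hat X_{n+l-j}$, where $\hat Y_k=FA_F^{k-1}L$ ($k\ge1$), $\hat Y_k=0$ ($k\le0$), $\hat X_k=C_FA_F^{k-1}L$ ($k\ge1$), $\hat X_0=I_m$, $\hat X_k=0$ ($k<0$); $I_{C,s}(F,L)=\begin{bmatrix}\hat Y_s(F,L)\\ \hat X_s(F,L)\end{bmatrix}$. *)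

From HB Require Import structures.
From mathcomp Require Import all_boot all_order all_algebra.
Set Implicit Arguments. Unset Strict Implicit. Unset Printing Implicit Defensive.
Import Order.TTheory GRing.Theory Num.Theory.
Local Open Scope ring_scope.

Section Defs.
Variable R : realFieldType.

Definition ctrb_mx (n p : nat) (A : 'M[R]_n) (B : 'M[R]_(n, p)) :=
  \mxrow_(i < n) (A ^+ i *m B).
Definition obsv_mx (n m : nat) (A : 'M[R]_n) (C : 'M[R]_(m, n)) :=
  \mxcol_(i < n) (C *m A ^+ i).
Definition controllable (n p : nat) (A : 'M[R]_n) (B : 'M[R]_(n, p)) : Prop :=
  \rank (ctrb_mx A B) = n.
Definition observable (n m : nat) (A : 'M[R]_n) (C : 'M[R]_(m, n)) : Prop :=
  \rank (obsv_mx A C) = n.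

Definition deadbeat (n p : nat) (A : 'M[R]_n) (B : 'M[R]_(n, p))
  (Fd : 'M[R]_(p, n)) : Prop :=
  char_poly (A + B *m Fd) = 'X^n.

Variables (n p m : nat) (A : 'M[R]_n) (B : 'M[R]_(n, p))
          (C : 'M[R]_(m, n)) (D : 'M[R]_(m, p)).

Definition AF (F : 'M[R]_(p, n)) : 'M[R]_n := A + B *m F.
Definition CF (F : 'M[R]_(p, n)) : 'M[R]_(m, n) := C + D *m F.

Definition Mpar (F : 'M[R]_(p, n)) (k : int) : 'M[R]_(p, p) :=
  match k with
  | Posz 0 => 1%:M
  | Posz k'.+1 => F *m (AF F) ^+ k' *m B
  | Negz _ => 0
  end.
Definition Npar (F : 'M[R]_(p, n)) (k : int) : 'M[R]_(m, p) :=
  match k with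
  | Posz 0 => D
  | Posz k'.+1 => CF F *m (AF F) ^+ k' *m B
  | Negz _ => 0
  end.
Definition Yhatpar (F : 'M[R]_(p, n)) (L : 'M[R]_(n, m)) (k : int) : 'M[R]_(p, m) :=
  match k with
  | Posz k'.+1 => F *m (AF F) ^+ k' *m L
  | _ => 0
  end.
Definition Xhatpar (F : 'M[R]_(p, n)) (L : 'M[R]_(n, m)) (k : int) : 'M[R]_(m, m) :=
  match k with
  | Posz 0 => 1%:M
  | Posz k'.+1 => CF F *m (AF F) ^+ k' *m L
  | Negz _ => 0
  end.

(* Block (l,j) (0-based here; the index n+l-j is unchanged by the shift). *)
Definition Ms (s : nat) (F : 'M[R]_(p, n)) :
  'M[R]_(\sum_(l < s) p, \sum_(j < s + n) p) :=
  \mxblock_(l < s, j < s + n) Mpar F (n%:Z + l%:Z - j%:Z).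
Definition Ns (s : nat) (F : 'M[R]_(p, n)) :
  'M[R]_(\sum_(l < s) m, \sum_(j < s + n) p) :=
  \mxblock_(l < s, j < s + n) Npar F (n%:Z + l%:Z - j%:Z).
Definition IG (s : nat) (F : 'M[R]_(p, n)) := col_mx (Ms s F) (Ns s F).

Definition Yhats (s : nat) (F : 'M[R]_(p, n)) (L : 'M[R]_(n, m)) :
  'M[R]_(\sum_(l < s) p, \sum_(j < s + n) m) :=
  \mxblock_(l < s, j < s + n) Yhatpar F L (n%:Z + l%:Z - j%:Z).
Definition Xhats (s : nat) (F : 'M[R]_(p, n)) (L : 'M[R]_(n, m)) :
  'M[R]_(\sum_(l < s) m, \sum_(j < s + n) m) :=
  \mxblock_(l < s, j < s + n) Xhatpar F L (n%:Z + l%:Z - j%:Z).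
Definition IC (s : nat) (F : 'M[R]_(p, n)) (L : 'M[R]_(n, m)) :=
  col_mx (Yhats s F L) (Xhats s F L).

Definition kernel_model_on (L : 'M[R]_(n, m))
  (u : int -> 'cV[R]_p) (y r : int -> 'cV[R]_m) (xh : int -> 'cV[R]_n)
  (t0 t1 : int) : Prop :=
  (forall t : int, t0 <= t < t1 ->
     xh (t + 1) = A *m xh t + B *m u t + L *m r t) /\
  (forall t : int, t0 <= t <= t1 ->
     y t = C *m xh t + D *m u t + r t).

End Defs.

Definition stack (R : Type) (d : nat) (phi : int -> 'cV[R]_d) (s : nat) (k : int)
  : 'M[R]_(\sum_(l < s) d, 1) :=
  \mxcol_(l < s) phi (k + (l.+1)%:Z)%R.

From HB Require Import structures.
From mathcomp Require Import all_boot all_order all_algebra.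
From mathcomp Require Import zify ring.
Set Implicit Arguments. Unset Strict Implicit. Unset Printing Implicit Defensive.
Import Order.TTheory GRing.Theory Num.Theory.
Local Open Scope ring_scope.

(* Let z be the response of z+ = (A + B F_d) z + L r from z = 0.  Then x̂ - z is a
   trajectory of (A, B) driven by u - F_d z.  By controllability some input on
   [0, n) steers (A, B) from 0 to (x̂ - z)(n); continued by u - F_d z it becomes
   an input w whose zero-state trajectory x equals x̂ - z from time n on.  With
   v := w - F x, x is also the zero-state trajectory of (A + B F, B) under v, and
   the block rows of I_G(F) v + I_C(F_d, L) r are the sums F x + v + F_d z = u and
   C_F x + D v + C_{F_d} z + r = y. *)

Section ZeroStateResponse.
Variable R : realFieldType.

Definition markov (n p m : nat) (A : 'M[R]_n) (B : 'M[R]_(n, p))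
  (C : 'M[R]_(m, n)) (D : 'M[R]_(m, p)) (i : int) : 'M[R]_(m, p) :=
  match i with Posz 0 => D | Posz k.+1 => C *m A ^+ k *m B | Negz _ => 0 end.

Fixpoint state0 (n p : nat) (A : 'M[R]_n) (B : 'M[R]_(n, p))
  (w : nat -> 'cV[R]_p) (t : nat) : 'cV[R]_n :=
  if t is t'.+1 then A *m state0 A B w t' + B *m w t' else 0.

Variables (n p : nat) (A : 'M[R]_n) (B : 'M[R]_(n, p)).

Lemma state0_sum (w : nat -> 'cV[R]_p) t :
  state0 A B w t = \sum_(j < t) A ^+ (t.-1 - j) *m B *m w j.
Proof.
elim: t => [|t IH] /=; first by rewrite big_ord0.
rewrite big_ord_recr /= subnn expr0 mul1mx IH mulmx_sumr; congr (_ + _).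
apply: eq_bigr => j _; rewrite !mulmxA mulmxE -exprS.
by have -> : (t.-1 - j).+1 = (t - j)%N by have := ltn_ord j; lia.
Qed.

Lemma eq_state0 (w w' : nat -> 'cV[R]_p) t :
  (forall j, (j < t)%N -> w j = w' j) -> state0 A B w t = state0 A B w' t.
Proof.
elim: t => [|t IH] //= eq_w.
by rewrite eq_w // IH // => j ltjt; apply/eq_w/ltnW.
Qed.

Lemma markov_conv m (C : 'M[R]_(m, n)) (D : 'M[R]_(m, p)) N
    (w : nat -> 'cV[R]_p) t : (t < N)%N ->
  \sum_(j < N) markov A B C D (t%:Z - j%:Z) *m w j
    = C *m state0 A B w t + D *m w t.
Proof.
move=> lttN; rewrite state0_sum mulmx_sumr.
rewrite -(big_mkord xpredT (fun j => markov A B C D (t%:Z - j%:Z) *m w j)).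
rewrite (big_cat_nat _ (n := t.+1)) //= [X in _ + X]big1_seq ?addr0; last first.
  move=> j /andP[_]; rewrite mem_index_iota => /andP[ltjt _].
  have -> : t%:Z - j%:Z = Negz (j - t.+1) by rewrite NegzE; lia.
  exact: mul0mx.
rewrite big_nat_recr //= subrr big_mkord; congr (_ + _).
apply: eq_bigr => j _.
have -> : t%:Z - j%:Z = ((t.-1 - j).+1)%:Z by have := ltn_ord j; lia.
by rewrite /= !mulmxA.
Qed.

Lemma toeplitz_markov_mul m (C : 'M[R]_(m, n)) (D : 'M[R]_(m, p)) d s N
    (w : nat -> 'cV[R]_p) : (s + d <= N)%N ->
  \mxblock_(l < s, j < N) markov A B C D (d%:Z + l%:Z - j%:Z)
      *m \mxcol_(j < N) w j
    = \mxcol_(l < s) (C *m state0 A B w (d + l) + D *m w (d + l)%N).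
Proof.
move=> leN; rewrite mul_mxblock_mxrow; apply: eq_mxcol => l.
rewrite -(markov_conv _ _ (N := N)); last by have := ltn_ord l; lia.
by apply: eq_bigr => j _; rewrite PoszD.
Qed.

Lemma state0_feedback (F : 'M[R]_(p, n)) (w : nat -> 'cV[R]_p) t :
  state0 (A + B *m F) B (fun j => w j - F *m state0 A B w j) t
    = state0 A B w t.
Proof.
elim: t => //= t ->.
by rewrite mulmxDl mulmxBr -mulmxA addrACA subrr addr0.
Qed.

Lemma trajectory_state0 (x : nat -> 'cV[R]_n) (w : nat -> 'cV[R]_p) t0 t1 :
  x t0 = state0 A B w t0 ->
  (forall j, (t0 <= j < t1)%N -> x j.+1 = A *m x j + B *m w j) ->
  forall j, (t0 <= j <= t1)%N -> x j = state0 A B w j.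
Proof.
move=> x_t0 x_step j /andP[/subnKC <-].
elim: (j - t0)%N => [|d IH] le_dt1; first by rewrite addn0.
rewrite addnS x_step ?IH //=; lia.
Qed.

Lemma controllable_reach (x : 'cV[R]_n) :
  controllable A B -> exists w : nat -> 'cV[R]_p, state0 A B w n = x.
Proof.
move=> ctrlAB.
have fullT : row_full (ctrb_mx A B)^T by rewrite /row_full mxrank_tr ctrlAB.
have /submxP[G xTG] := submx_full x^T fullT.
pose g (i : nat) : 'cV[R]_p := oapp (fun o : 'I_n => submxcol G^T o) 0 (insub i).
exists (fun j => g (n.-1 - j)%N); rewrite state0_sum.
have -> : x = ctrb_mx A B *m G^T by rewrite -[x]trmxK xTG trmx_mul trmxK.
rewrite /ctrb_mx -[G^T](@submxcolK _ _ (fun _ => p)) mul_mxrow_mxcol.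
rewrite (reindex_inj rev_ord_inj) /=; apply: eq_bigr => j _.
have -> : (n.-1 - (n - j.+1))%N = j by have := ltn_ord j; lia.
by rewrite /g valK.
Qed.

End ZeroStateResponse.

Lemma residual_steering (R : realFieldType) (n p m : nat) (A : 'M[R]_n)
    (B : 'M[R]_(n, p)) (L : 'M[R]_(n, m)) (Fd : 'M[R]_(p, n))
    (U : nat -> 'cV[R]_p) (Rr : nat -> 'cV[R]_m) (X : nat -> 'cV[R]_n) N :
  controllable A B ->
  (forall j, (j < N)%N -> X j.+1 = A *m X j + B *m U j + L *m Rr j) ->
  let Z := state0 (A + B *m Fd) L Rr in
  exists w : nat -> 'cV[R]_p,
    (forall j, (n <= j)%N -> w j = U j - Fd *m Z j) /\
    (forall j, (n <= j <= N)%N -> X j - Z j = state0 A B w j).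
Proof.
move=> ctrlAB X_step Z.
have [u0 u0_reach] := controllable_reach (X n - Z n) ctrlAB.
pose w j := if (j < n)%N then u0 j else U j - Fd *m Z j.
have w_tail j : (n <= j)%N -> w j = U j - Fd *m Z j by rewrite /w ltnNge => ->.
exists w; split => // j; apply: (trajectory_state0 (x := fun i => X i - Z i)).
  by rewrite -u0_reach; apply: eq_state0 => i ltin; rewrite /w ltin.
move=> i /andP[leni ltiN]; rewrite /= X_step // w_tail // /Z /=.
rewrite mulmxDl !mulmxBr -mulmxA.
by apply/matrixP => a b; rewrite !mxE; ring.
Qed.

Section ImageRepresentation.
Variables (R : realFieldType) (n p m : nat).
Variables (A : 'M[R]_n) (B : 'M[R]_(n, p)) (C : 'M[R]_(m, n)) (D : 'M[R]_(m, p)).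

Lemma Ms_mul s (F : 'M[R]_(p, n)) (w : nat -> 'cV[R]_p) :
  Ms A B s F *m \mxcol_(j < s + n) w j
    = \mxcol_(l < s) (F *m state0 (AF A B F) B w (n + l) + w (n + l)%N).
Proof.
rewrite /Ms (eq_mxblock
  (B_ := fun l j => markov (AF A B F) B F 1%:M (n%:Z + l%:Z - j%:Z))).
  by rewrite toeplitz_markov_mul //; apply: eq_mxcol => l; rewrite mul1mx.
by move=> l j; case: (_ - _) => [[|i]|i].
Qed.

Lemma Ns_mul s (F : 'M[R]_(p, n)) (w : nat -> 'cV[R]_p) :
  Ns A B C D s F *m \mxcol_(j < s + n) w j
    = \mxcol_(l < s) (CF C D F *m state0 (AF A B F) B w (n + l) + D *m w (n + l)%N).
Proof.
rewrite /Ns (eq_mxblock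
  (B_ := fun l j => markov (AF A B F) B (CF C D F) D (n%:Z + l%:Z - j%:Z))).
  exact: toeplitz_markov_mul.
by move=> l j; case: (_ - _) => [[|i]|i].
Qed.

Lemma Yhats_mul s (F : 'M[R]_(p, n)) (L : 'M[R]_(n, m)) (w : nat -> 'cV[R]_m) :
  Yhats A B s F L *m \mxcol_(j < s + n) w j
    = \mxcol_(l < s) (F *m state0 (AF A B F) L w (n + l)).
Proof.
rewrite /Yhats (eq_mxblock
  (B_ := fun l j => markov (AF A B F) L F 0 (n%:Z + l%:Z - j%:Z))).
  by rewrite toeplitz_markov_mul //; apply: eq_mxcol => l; rewrite mul0mx addr0.
by move=> l j; case: (_ - _) => [[|i]|i].
Qed.

Lemma Xhats_mul s (F : 'M[R]_(p, n)) (L : 'M[R]_(n, m)) (w : nat -> 'cV[R]_m) :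
  Xhats A B C D s F L *m \mxcol_(j < s + n) w j
    = \mxcol_(l < s) (CF C D F *m state0 (AF A B F) L w (n + l) + w (n + l)%N).
Proof.
rewrite /Xhats (eq_mxblock
  (B_ := fun l j => markov (AF A B F) L (CF C D F) 1%:M (n%:Z + l%:Z - j%:Z))).
  by rewrite toeplitz_markov_mul //; apply: eq_mxcol => l; rewrite mul1mx.
by move=> l j; case: (_ - _) => [[|i]|i].
Qed.

End ImageRepresentation.

Theorem lemma4 (R : realFieldType) (n p m : nat)
  (A : 'M[R]_n) (B : 'M[R]_(n, p)) (C : 'M[R]_(m, n)) (D : 'M[R]_(m, p)) :
  (0 < n)%N -> controllable A B -> observable A C ->
  forall (L : 'M[R]_(n, m)) (Fd : 'M[R]_(p, n)), deadbeat A B Fd ->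
  forall (s : nat) (k : int), (1 <= s)%N ->
  forall (u : int -> 'cV[R]_p) (y r : int -> 'cV[R]_m) (xh : int -> 'cV[R]_n),
  kernel_model_on A B C D L u y r xh (k - n%:Z + 1) (k + s%:Z) ->
  forall F : 'M[R]_(p, n),
  exists v : 'cV[R]_(\sum_(j < s + n) p),
    col_mx (stack u s k) (stack y s k) =
    IG A B C D s F *m v + IC A B C D s Fd L *m stack r (s + n) (k - n%:Z).
Proof.
move=> _ ctrlAB _ L Fd _ s k _ u y r xh [xh_step y_out] F.
set t0 := k - n%:Z + 1.
pose U j := u (t0 + j%:Z); pose Rr j := r (t0 + j%:Z); pose X j := xh (t0 + j%:Z).
have X_step j : (j < (s + n).-1)%N -> X j.+1 = A *m X j + B *m U j + L *m Rr j.
  move=> ltj; rewrite /X -xh_step; first by congr xh; lia.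
  by rewrite /t0; apply/andP; split; lia.
have [w [w_tail X'_state]] := residual_steering Fd ctrlAB X_step.
pose v j := w j - F *m state0 A B w j.
exists (\mxcol_(j < s + n) v j).
have -> : stack r (s + n) (k - n%:Z) = \mxcol_(j < s + n) Rr j.
  by apply: eq_mxcol => j; rewrite /Rr /t0; congr r; lia.
rewrite /IG /IC !mul_col_mx add_col_mx (Ms_mul _ _ _ _ v) (Ns_mul _ _ _ _ _ _ v).
rewrite (Yhats_mul _ _ _ _ _ Rr) (Xhats_mul _ _ _ _ _ _ _ Rr) -!mxcolD.
congr col_mx; apply: eq_mxcol => l; have ltls := ltn_ord l.
all: rewrite /v /AF state0_feedback -X'_state ?w_tail ?leq_addr //; last by lia.
- have -> : u (k + l.+1%:Z) = U (n + l)%N by rewrite /U /t0; congr u; lia.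
  by apply/matrixP => a b; rewrite !mxE; ring.
- rewrite y_out; last by apply/andP; split; lia.
  have -> : k + l.+1%:Z = t0 + (n + l)%N by rewrite /t0; lia.
  rewrite /CF !mulmxDl !mulmxBr -!mulmxA.
  by apply/matrixP => a b; rewrite !mxE; ring.
Qed.
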